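(* Let $\mathfrak M$ (modelled on $X$) be a Banach manifold with chart family $\mathscr A$ and $\mathfrak M_0$ (modelled on $X_0$) a $C^1$-embedded Banach submanifold of $\mathfrak M$ with respect to $\mathscr A$, such that $(\mathfrak M,\mathfrak M_0,\mathscr A)$ is inward spreadable. Let $\eta\in\mathfrak M_0$ and let $f:(-\varepsilon,\varepsilon)\to\mathfrak M_0$ with $f(0)=\eta$ be strongly differentiable at $t=0$. Then $f$ is fully differentiable at $t=0$: for every $\mathfrak M_0$-regular chart $(\mathcal U,\varphi)$ at $\eta$ the map $t\mapsto\varphi(f(t))$ is differentiable at $t=0$ in the topology of $X$, and for any two $\mathfrak M_0$-regular charts $(\mathcal U,\varphi),(\mathcal V,\psi)$ at $\eta$, $$(\psi\circ f)'(0)=(\psi\circ\varphi^{-1})'(\varphi(\eta))\,(\varphi\circ f)'(0).$$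
   Context: Densely embedded spaces and the class $\mathfrak C^k$. For Banach spaces $X$ and $X_0$, $X_0$ is a densely embedded Banach subspace of $X$ if $X_0$ is a dense linear subspace of $X$ and there is $C>0$ with $\|x\|_X\le C\|x\|_{X_0}$ for $x\in X_0$. For such $X_0\subseteq X$, a Banach space $Y$, an open set $U_0\subseteq X_0$ and an integer $k\ge1$, $\mathfrak C^k(U_0;X,Y)$ denotes the set of maps $F:U_0\to Y$ such that (i) for each $x_0\in U_0$ there are bounded symmetric $j$-linear maps $F^{(j)}(x_0):X^j\to Y$, $1\le j\le k$, with $\|F(x)-F(x_0)-\sum_{j=1}^k\frac1{j!}F^{(j)}(x_0)(x-x_0,\dots,x-x_0)\|_Y/\|x-x_0\|_{X_0}^k\to0$ as $\|x-x_0\|_{X_0}\to0$, and (ii) $x\mapsto F^{(j)}(x)$ is continuous from $U_0$ (with the $X_0$-topology) into the space $L^j(X,Y)$ of bounded $j$-linear maps. We write $F'=F^{(1)}$. Embedded submanifolds. Let $\mathfrak M,\mathfrak M_0$ be topological Banach manifolds modelled on $X$, $X_0$, let $\mathscr A$ be a family of local charts of $\mathfrak M$, and $k\ge1$. $\mathfrak M_0$ is a $C^k$-embedded Banach submanifold of $\mathfrak M$ with respect to $\mathscr A$ if: (D1) $X_0$ is a densely embedded Banach subspace of $X$; (D2) $\mathfrak M_0\subseteq\mathfrak M$ and $\mathcal U\cap\mathfrak M_0$ is open in $\mathfrak M_0$ for every open $\mathcal U\subseteq\mathfrak M$; (D3) the domains of the charts of $\mathscr A$ cover $\mathfrak M$;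 (D4) for $\eta\in\mathfrak M_0$ and $(\mathcal U,\varphi)\in\mathscr A$ with $\eta\in\mathcal U$, $(\mathcal U_0,\varphi|_{\mathcal U_0})$ with $\mathcal U_0:=\mathcal U\cap\mathfrak M_0$ is a local chart of $\mathfrak M_0$; (D5) for $\eta\in\mathfrak M_0$ and $(\mathcal U,\varphi),(\mathcal V,\psi)\in\mathscr A$ with $\eta\in\mathcal U\cap\mathcal V$, $\psi\circ\varphi^{-1}\in\mathfrak C^k(\varphi(\mathcal U_0\cap\mathcal V_0);X,X)$ and $\varphi\circ\psi^{-1}\in\mathfrak C^k(\psi(\mathcal U_0\cap\mathcal V_0);X,X)$. A chart of $\mathscr A$ whose domain contains $\eta$ is an $\mathfrak M_0$-regular local chart at $\eta$. $(\mathfrak M,\mathfrak M_0,\mathscr A)$ (with $\mathfrak M_0$ $C^1$-embedded) is inward spreadable if there is a Banach manifold $\mathfrak M_1\subseteq\mathfrak M_0$, modelled on a Banach space $X_1$, which is a $C^1$-embedded Banach submanifold of $\mathfrak M_0$ with respect to the restrictions to $\mathfrak M_0$ of the charts of $\mathscr A$ ($\mathfrak M_1$ is then an inner $C^1$-kernel and the charts of $\mathscr A$ are called $(\mathfrak M_0,\mathfrak M_1)$-regular). For charts at $\eta\in\mathfrak M_0$, $(\varphi\circ\psi^{-1})'(\psi(\eta))\in L(X)$ is the first derivative in the $\mathfrak C^1$ sense. A curve $f:(-\varepsilon,\varepsilon)\to\mathfrak M_0$ with $f(0)=\eta$ is strongly differentiable at $t=0$ if for some $\mathfrak M_0$-regular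 chart $\varphi$ at $\eta$, $t\mapsto\varphi(f(t))$ is differentiable at $t=0$ in the topology of $X_0$. *)

From HB Require Import structures.
From mathcomp Require Import all_boot all_order all_algebra.
From mathcomp Require Import all_classical all_reals all_analysis.
Set Implicit Arguments. Unset Strict Implicit. Unset Printing Implicit Defensive.
Import Order.TTheory GRing.Theory Num.Theory.
Import numFieldNormedType.Exports.
Local Open Scope classical_set_scope.
Local Open Scope ring_scope.

Section Defs.
Variable R : realType.

(* (U, phi) is a local chart of the topological space M modelled on X:
   U is open, phi restricted to U is a homeomorphism onto an open subset of X
   (injective and continuous on U, and an open map on U). *)
Definition is_chart (M : topologicalType) (X : normedModType R)
    (U : set M) (phi : M -> X) : Prop :=
  [/\ open U, {in U &, injective phi}, {within U, continuous phi} &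
      forall V : set M, open V -> V `<=` U -> open (phi @` V)].

Definition banach_manifold (M : topologicalType) (X : completeNormedModType R) : Prop :=
  forall p : M, exists U (phi : M -> X), is_chart U phi /\ U p.

Definition densely_embedded (X X0 : completeNormedModType R) (i : {linear X0 -> X}) : Prop :=
  [/\ injective i, dense (range i) & exists2 C : R, 0 < C & forall x, `|i x| <= C * `|x|].

Definition frakC1 (X X0 : completeNormedModType R) (i : {linear X0 -> X})
    (Y : completeNormedModType R) (U0 : set X0) (F : X0 -> Y)
    (DF : X0 -> {linear X -> Y}) : Prop :=
  [/\ open U0,
      (forall x0, U0 x0 -> exists C : R, forall h, `|DF x0 h| <= C * `|h|),
      (forall x0, U0 x0 ->
         (fun x => `|F x - F x0 - DF x0 (i x - i x0)| / `|x - x0|) @ x0^' --> (0 : R)) &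
      (* continuity of x |-> DF x from U0 (X0-topology) into L(X, Y) (operator norm) *)
      (forall x0, U0 x0 -> forall e : R, 0 < e ->
         \forall x \near x0, forall h : X, `|DF x h - DF x0 h| <= e * `|h|)].

Definition restricts (X X0 : completeNormedModType R) (i : {linear X0 -> X})
    (M M0 : topologicalType) (j : M0 -> M) (c : set M * (M -> X)) (phi0 : M0 -> X0) :=
  forall m : M0, c.1 (j m) -> i (phi0 m) = c.2 (j m).

(* The transition map  d.2 o c.2^{-1}  on c.2(U0 /\ V0), with U0, V0 the traces on M0,
   is in frak C^1 (..; X, X). *)
Definition transition_C1 (X X0 : completeNormedModType R) (i : {linear X0 -> X})
    (M M0 : topologicalType) (j : M0 -> M) (c d : set M * (M -> X)) :=
  forall phi0 : M0 -> X0, restricts i j c phi0 ->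
  exists (F : X0 -> X) (DF : X0 -> {linear X -> X}),
    (forall m, c.1 (j m) -> d.1 (j m) -> F (phi0 m) = d.2 (j m)) /\
    frakC1 i (phi0 @` (j @^-1` (c.1 `&` d.1))) F DF.

Definition C1_embedded (X X0 : completeNormedModType R) (i : {linear X0 -> X})
    (M M0 : topologicalType) (j : M0 -> M) (A : set (set M * (M -> X))) : Prop :=
  [/\
      (forall c, A c -> is_chart c.1 c.2) /\
      densely_embedded i,
      (injective j /\ (forall U : set M, open U -> open (j @^-1` U))),
      (forall p : M, exists c, (A c /\ c.1 p)),
      (forall (eta : M0) c, A c -> c.1 (j eta) ->
                  exists phi0 : M0 -> X0, restricts i j c phi0 /\
                    is_chart (j @^-1` c.1) phi0) &
      (forall (eta : M0) c d, A c -> A d -> c.1 (j eta) -> d.1 (j eta) ->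
                  transition_C1 i j c d /\ transition_C1 i j d c)].

Definition restrict_atlas (X X0 : completeNormedModType R) (i : {linear X0 -> X})
    (M M0 : topologicalType) (j : M0 -> M) (A : set (set M * (M -> X)))
    : set (set M0 * (M0 -> X0)) :=
  [set c | exists2 d, A d & c.1 = j @^-1` d.1 /\ restricts i j d c.2].

Definition inward_spreadable (X X0 : completeNormedModType R) (i : {linear X0 -> X})
    (M M0 : topologicalType) (j : M0 -> M) (A : set (set M * (M -> X))) : Prop :=
  exists (X1 : completeNormedModType R) (i1 : {linear X1 -> X0})
         (M1 : topologicalType) (j1 : M1 -> M0),
    banach_manifold M1 X1 /\ C1_embedded i1 j1 (restrict_atlas i j A).

Definition strongly_differentiable_at0 (X X0 : completeNormedModType R)
    (i : {linear X0 -> X}) (M M0 : topologicalType) (j : M0 -> M)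
    (A : set (set M * (M -> X))) (f : R -> M0) : Prop :=
  exists (c : set M * (M -> X)) (phi0 : M0 -> X0),
    [/\ A c, c.1 (j (f 0)), restricts i j c phi0,
        (\forall t \near (0 : R), c.1 (j (f t))) &
        derivable (fun t : R => phi0 (f t)) 0 1].

End Defs.

From HB Require Import structures.
From mathcomp Require Import all_boot all_order all_algebra.
From mathcomp Require Import all_classical all_reals all_analysis.
From mathcomp Require Import ring lra.
Import Order.TTheory GRing.Theory Num.Theory.
Import numFieldNormedType.Exports.
Local Open Scope classical_set_scope.
Local Open Scope ring_scope.

(* A strongly differentiable curve f is continuous into M0, since charts are
   homeomorphisms onto open sets, so it eventually stays in the domain of
   every regular chart. For regular charts phi and psi, psi o f is the
   transition map G applied to the X0-valued curve phi0 o f. The remainder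
   of a frak C^1 map is o(|x - x0|) for the norm of X, not only of X0: on the
   segment [x0, x] the mean value inequality bounds it by the oscillation of
   G' in L(X), which is small for the X0-topology. As phi0 o f is continuous
   in X0 and phi o f is differentiable in X, the chain rule then gives
   (psi o f)'(0) = G'(phi0 eta) (phi o f)'(0). Starting from the chart in
   which f is strongly differentiable, where phi o f = i o phi0 o f, this
   yields differentiability in every regular chart. *)

Section derivative_at_0.
Context {R : realType}.

Let quotient_shift0 {V : normedModType R} (u : R -> V) :
  (fun h : R => h^-1 *: ((u \o shift 0) (h *: 1) - u 0)) =
  (fun h : R => h^-1 *: (u h - u 0)).
Proof. by apply: funext => h /=; rewrite addr0 [h *: 1]mulr1. Qed.

Lemma derivable1_quotient_cvg {V : normedModType R} (u : R -> V) :
  derivable u 0 1 -> (fun h => h^-1 *: (u h - u 0)) @ 0^' --> 'D_1 u 0.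
Proof. by rewrite /derivable -quotient_shift0. Qed.

Lemma quotient_cvg_derive1 {V : normedModType R} (u : R -> V) (l : V) :
  (fun h => h^-1 *: (u h - u 0)) @ 0^' --> l -> derivable u 0 1 /\ 'D_1 u 0 = l.
Proof.
rewrite -quotient_shift0 => ul; split; first by apply/cvg_ex; exists l.
exact: cvg_lim.
Qed.

Lemma bounded_linear_continuous_le {V W : normedModType R} {L : {linear V -> W}} {C : R} :
  (forall v, `|L v| <= C * `|v|) -> continuous L.
Proof.
move=> LC; apply/bounded_linear_continuous/linear_boundedP.
near=> r => v; apply: (le_trans (LC v)); apply: ler_wpM2r; first exact: normr_ge0.
by near: r; apply: nbhs_pinfty_ge; rewrite num_real.
Unshelve. all: by end_near.
Qed.

(* A chain rule needing the linear approximation only along the curve [u]. *)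
Lemma derive1_linear_approx {V W : normedModType R} {u : R -> V} {G : R -> W}
    {L : {linear V -> W}} {C : R} :
  (forall v, `|L v| <= C * `|v|) -> derivable u 0 1 ->
  (forall e, 0 < e -> \forall h \near 0,
     `|G h - G 0 - L (u h - u 0)| <= e * `|u h - u 0|) ->
  derivable G 0 1 /\ 'D_1 G 0 = L ('D_1 u 0).
Proof.
move=> LC /derivable1_quotient_cvg du approx; apply: quotient_cvg_derive1.
set q := fun h : R => h^-1 *: (u h - u 0).
have -> : (fun h => h^-1 *: (G h - G 0)) =
          (fun h => L (q h) + h^-1 *: (G h - G 0 - L (u h - u 0))).
  by apply: funext => h; rewrite /q linearZ /= -scalerDr [L _ + _]addrC subrK.
rewrite -[X in _ --> X]addr0; apply: cvgD.
  exact: (continuous_cvg _ (bounded_linear_continuous_le LC _) du).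
have u'1 : 0 < `|'D_1 u 0| + 1 by rewrite ltr_pwDr // normr_ge0.
apply/cvgr0Pnorm_le => e e0.
have qbd := cvgr_norm_le _ du _ (ltr_pwDr ltr01 (lexx _)).
have e'0 : 0 < e / (`|'D_1 u 0| + 1) by rewrite divr_gt0.
near=> h.
rewrite normrZ normfV ler_pdivrMl ?normr_gt0; last first.
  by near: h; exact: nbhs_dnbhs_neq.
apply: (le_trans (_ : _ <= e / (`|'D_1 u 0| + 1) * `|u h - u 0|)).
  by near: h; apply: cvg_within; exact: approx.
have -> : `|u h - u 0| = `|h| * `|q h|.
  rewrite /q normrZ normfV mulrA mulfV ?mul1r // normr_eq0.
  by near: h; exact: nbhs_dnbhs_neq.
rewrite mulrCA; apply: ler_wpM2l; first exact: normr_ge0.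
rewrite mulrAC ler_pdivrMr //; apply: ler_wpM2l; first exact: ltW.
by near: h; exact: qbd.
Unshelve. all: by end_near.
Qed.

End derivative_at_0.

Section mean_value_inequality.
Variables (R : realType) (X : normedModType R) (phi : R -> X) (M : R).
Hypothesis slope_le : forall s, 0 <= s <= 1 -> forall e, 0 < e ->
  \forall h \near (0 : R), `|phi (s + h) - phi s| <= (M + e) * `|h|.

Section slope_bound.
Variable K : R.
Hypothesis MK : M < K.

Let bounded_upto s := forall s', 0 <= s' <= s -> `|phi s' - phi 0| <= K * s'.
(* Continuous induction: the bound propagates up to the supremum of [S] and
   then past it, unless that supremum is 1. *)
Let S := [set s | 0 <= s <= 1 /\ bounded_upto s].
Let sigma := sup S.

Let S0 : S 0.
Proof.
split=> [|s /andP[s0 s0']]; first by rewrite lexx ler01.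
have -> : s = 0 by apply/eqP; rewrite eq_le s0 s0'.
by rewrite subrr normr0 mulr0.
Qed.

Let has_supS : has_sup S.
Proof. by split; [exists 0 | exists 1 => s [/andP[_ ->]]]. Qed.

Let sigma01 : 0 <= sigma <= 1.
Proof.
apply/andP; split; first exact: sup_upper_bound.
by apply: ge_sup; [exists 0 | move=> s [/andP[_ ->]]].
Qed.

Let bounded_below_sigma s : 0 <= s < sigma -> `|phi s - phi 0| <= K * s.
Proof.
move=> /andP[s0 s_sigma].
have gap : 0 < sigma - s by rewrite subr_gt0.
have [t [_ t_bnd] st] := sup_adherent gap has_supS.
rewrite opprB addrC subrK in st.
by apply: t_bnd; rewrite s0 ltW.
Qed.

Let slope_at_sigma :
  exists2 d : R, 0 < d & forall h, `|h| < d -> `|phi (sigma + h) - phi sigma| <= K * `|h|.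
Proof.
have KM : 0 < K - M by rewrite subr_gt0.
have /nbhs_ballP[d d0 dP] := slope_le _ sigma01 _ KM.
exists d => // h hd; have := dP h; rewrite [M + _]addrC subrK; apply.
by rewrite -ball_normE /= sub0r normrN.
Qed.

Let small_step (d c : R) : 0 < d -> 0 < c ->
  exists m : R, [/\ 0 < m, m < d & m <= c].
Proof.
move=> d0 c0; exists (Num.min (d / 2) c).
by rewrite lt_min ge_min lexx orbT gt_min divr_gt0 // c0 ltr_pdivrMr // ltr_pMr ?ltr1n.
Qed.

Let bounded_at_sigma : `|phi sigma - phi 0| <= K * sigma.
Proof.
have [d d0 dP] := slope_at_sigma.
have [->|sigma0] := eqVneq sigma 0; first by rewrite subrr normr0 mulr0.
have sigma_gt0 : 0 < sigma by rewrite lt_neqAle eq_sym sigma0; case/andP: sigma01.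
have [m [m0 md ms]] := small_step _ _ d0 sigma_gt0.
have h1 := dP (- m); rewrite normrN gtr0_norm // distrC in h1.
rewrite (le_trans (ler_distD (phi (sigma - m)) _ _)) //.
have -> : K * sigma = K * m + K * (sigma - m) by ring.
by apply: lerD; [exact: h1 | apply: bounded_below_sigma; apply/andP; split; lra].
Qed.

Let sigma_eq1 : sigma = 1.
Proof.
have [d d0 dP] := slope_at_sigma.
case/andP: sigma01 => sigma0; rewrite le_eqVlt => /orP[/eqP // | lt1].
have gap : 0 < 1 - sigma by rewrite subr_gt0.
have [m [m0 md ms]] := small_step _ _ d0 gap.
suff : S (sigma + m) by move=> /(sup_upper_bound has_supS); rewrite -/sigma; lra.
split=> [|s /andP[s0 s_le]]; first by apply/andP; split; lra.
have [s_lt|s_ge] := ltP s sigma; first by apply: bounded_below_sigma; rewrite s0.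
have := dP (s - sigma); rewrite ger0_norm ?subr_ge0 // [sigma + _]addrC subrK => h1.
rewrite (le_trans (ler_distD (phi sigma) _ _)) //.
have -> : K * s = K * (s - sigma) + K * sigma by ring.
by apply: lerD => //; apply: h1; lra.
Qed.

Lemma slope_bound01 : `|phi 1 - phi 0| <= K.
Proof. by have := bounded_at_sigma; rewrite sigma_eq1 mulr1. Qed.

End slope_bound.

Lemma mean_value_ineq01 : `|phi 1 - phi 0| <= M.
Proof. by apply/ler_addgt0Pr => k k0; apply: slope_bound01; rewrite ltrDl. Qed.
End mean_value_inequality.

Lemma near_segment {R : realType} {V : normedModType R} (z w : V) (P : V -> Prop) :
  (\forall x \near z, P x) -> \forall h \near (0 : R), P (z + h *: w).
Proof.
have line_cvg : (fun h : R => z + h *: w) @ 0 --> z.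
  rewrite -{2}[z]addr0 -(scale0r w).
  by apply: cvgD; [exact: cvg_cst | exact: cvgZ cvg_id (cvg_cst w)].
exact: line_cvg.
Qed.

Section frakC1_estimates.
Context {R : realType} {X X0 : completeNormedModType R} {i : {linear X0 -> X}}.
Context {U0 : set X0} {F : X0 -> X} {DF : X0 -> {linear X -> X}}.
Hypothesis F_C1 : frakC1 i U0 F DF.

Lemma frakC1_taylor_near z : U0 z -> forall e, 0 < e ->
  \forall x \near z, `|F x - F z - DF z (i x - i z)| <= e * `|x - z|.
Proof.
case: F_C1 => _ _ taylor _ Uz e e0.
have /cvgrPdist_le /(_ e e0) := taylor z Uz; rewrite near_withinE.
apply: filterS => x xP; have [->|xz] := eqVneq x z.
  by rewrite !subrr linear0 subrr !normr0 mulr0.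
have := xP xz; rewrite sub0r normrN ger0_norm ?divr_ge0 ?normr_ge0 //.
by rewrite ler_pdivrMr // normr_gt0 subr_eq0.
Qed.

Lemma frakC1_slope_near (L : {linear X -> X}) z w e e' : U0 z ->
  (forall v, `|DF z v - L v| <= e * `|v|) -> 0 < e' ->
  \forall h \near (0 : R),
    `|F (z + h *: w) - F z - h *: L (i w)| <= (e * `|i w| + e') * `|h|.
Proof.
move=> Uz DFL e'0.
have w1 : 0 < `|w| + 1 by rewrite ltr_pwDr // normr_ge0.
have e''0 : 0 < e' / (`|w| + 1) by rewrite divr_gt0.
have := near_segment _ w _ (frakC1_taylor_near _ Uz _ e''0); apply: filterS => h.
have -> : i (z + h *: w) - i z = h *: i w by rewrite linearD linearZ addrC addKr.
rewrite [z + _ - z]addrC addKr normrZ linearZ.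
set r := F _ - F z - _ => r_le.
have -> : F (z + h *: w) - F z - h *: L (i w) = r + h *: (DF z (i w) - L (i w)).
  by rewrite /r scalerBr addrA subrK.
rewrite (le_trans (ler_normD _ _)) // mulrDl addrC normrZ; apply: lerD.
  by rewrite [`|h| * _]mulrC; exact: ler_wpM2r (normr_ge0 _) _ _ (DFL _).
apply: (le_trans r_le); rewrite mulrCA [X in _ <= X]mulrC.
apply: ler_wpM2l; first exact: normr_ge0.
rewrite mulrAC ler_pdivrMr //; apply: ler_wpM2l; first exact: ltW.
by rewrite lerDl.
Qed.

Lemma frakC1_remainder_le x0 : U0 x0 -> forall e, 0 < e ->
  \forall x \near x0, `|F x - F x0 - DF x0 (i x - i x0)| <= e * `|i x - i x0|.
Proof.
case: (F_C1) => U0_open _ _ DF_cont x0U e e0.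
have U0x0 : \forall z \near x0, U0 z by apply: open_nbhs_nbhs.
have [r r0 ball_r] := (nbhs_ballP _ _).1 (filterI U0x0 (DF_cont x0 x0U e e0)).
near=> x; have : ball x0 r x by near: x; exact: near_ball.
rewrite -ball_normE /= distrC; set w := x - x0 => w_r.
pose phi s := F (x0 + s *: w) - s *: DF x0 (i w).
have -> : F x - F x0 - DF x0 (i x - i x0) = phi 1 - phi 0.
  by rewrite /phi !scale1r !scale0r addr0 subr0 /w [x0 + _]addrC subrK (linearB i) [RHS]addrAC.
rewrite -linearB -/w; apply: mean_value_ineq01 => s /andP[s0 s1] e' e'0.
have [Uz DFz] : U0 (x0 + s *: w) /\ forall v, `|DF (x0 + s *: w) v - DF x0 v| <= e * `|v|.
  apply: ball_r; rewrite -ball_normE /= opprD addrA subrr sub0r normrN normrZ.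
  by rewrite (le_lt_trans _ w_r) // ger0_norm // ler_piMl ?normr_ge0.
have phi_step h : phi (s + h) - phi s =
    F (x0 + s *: w + h *: w) - F (x0 + s *: w) - h *: DF x0 (i w).
  by rewrite /phi !scalerDl addrA [s *: _ + _]addrC opprD addrA opprB addrA subrK addrAC.
by apply: filterS (frakC1_slope_near _ _ w _ _ Uz DFz e'0) => h; rewrite phi_step.
Unshelve. all: by end_near.
Qed.

End frakC1_estimates.

Section chart_convergence.
Context {R : realType} {M : topologicalType} {X : normedModType R}.
Context {U : set M} {phi : M -> X}.
Hypothesis phi_chart : is_chart U phi.
Context {T : Type} {F : set_system T} {FF : Filter F} {u : T -> M} {p : M}.
Hypothesis Up : U p.

Lemma chart_cvg : u @ F --> p -> (phi \o u) @ F --> phi p.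
Proof.
move=> up; case: phi_chart => U_open _ phi_cont _.
rewrite continuous_open_subspace // in phi_cont.
by apply: continuous_cvg up; apply: phi_cont; rewrite inE.
Qed.

(* Charts are open maps, so the inverse of [phi] is continuous on its image. *)
Lemma chart_cvg_inv : (\forall t \near F, U (u t)) ->
  (phi \o u) @ F --> phi p -> u @ F --> p.
Proof.
move=> uU phiu W; rewrite nbhsE; move=> -[V [V_open Vp] VW].
case: phi_chart => U_open phi_inj _ /(_ (V `&` U)) phi_open.
have image_nbhs : nbhs (phi p) (phi @` (V `&` U)).
  apply: open_nbhs_nbhs; split; last by exists p; first split.
  by apply: phi_open; [exact: openI | move=> x []].
suff : \forall t \near F, W (u t) by [].
near=> t; apply: VW.
have [x [Vx Ux] phix] : (phi @` (V `&` U)) (phi (u t)) by near: t; exact: phiu.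
suff <- : x = u t by [].
by apply: phi_inj; rewrite ?inE //; near: t.
Unshelve. all: by end_near.
Qed.

End chart_convergence.

Lemma restricts_eq {R : realType} {X X0 : completeNormedModType R}
    {i : {linear X0 -> X}} {M M0 : topologicalType} {j : M0 -> M}
    c (phi1 phi2 : M0 -> X0) : injective i -> restricts i j c phi1 ->
  restricts i j c phi2 -> forall m, c.1 (j m) -> phi1 m = phi2 m.
Proof. by move=> i_inj r1 r2 m cm; apply: i_inj; rewrite r1 // r2. Qed.

Section regular_charts.
Context {R : realType} {X X0 : completeNormedModType R} {i : {linear X0 -> X}}.
Context {M M0 : topologicalType} {j : M0 -> M} {A : set (set M * (M -> X))}.
Hypothesis embedded : C1_embedded i j A.

Context {T : Type} {F : set_system T} {FF : Filter F} {u : T -> M0} {p : M0}.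
Context {c : set M * (M -> X)} {phi0 : M0 -> X0}.
Hypotheses (Ac : A c) (cp : c.1 (j p)) (phi0c : restricts i j c phi0).

Lemma regular_domain_near : u @ F --> p -> \forall t \near F, c.1 (j (u t)).
Proof.
case: embedded => [[charts _] [_ j_open] _ _ _] up.
have [c_open _ _ _] := charts c Ac.
apply: (up (j @^-1` c.1)); apply: open_nbhs_nbhs; split; [exact: j_open | exact: cp].
Qed.

Let restricted_chart :
  exists2 phi : M0 -> X0, is_chart (j @^-1` c.1) phi &
    forall m, c.1 (j m) -> phi m = phi0 m.
Proof.
case: embedded => [[_ [i_inj _ _]] _ _ /(_ p c Ac cp) [phi [phic phi_chart]] _].
by exists phi => // m cm; apply: restricts_eq i_inj phic phi0c m cm.
Qed.

Lemma regular_chart_cvg : u @ F --> p -> (phi0 \o u) @ F --> phi0 p.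
Proof.
have [phi phi_chart phi_phi0] := restricted_chart => up.
have near_dom := regular_domain_near up.
rewrite -phi_phi0 //; apply: cvg_trans (chart_cvg phi_chart cp up).
by apply: near_eq_cvg; near=> t; rewrite /= phi_phi0 //; near: t.
Unshelve. all: by end_near.
Qed.

Lemma regular_chart_cvg_inv : (\forall t \near F, c.1 (j (u t))) ->
  (phi0 \o u) @ F --> phi0 p -> u @ F --> p.
Proof.
have [phi phi_chart phi_phi0] := restricted_chart => near_dom phi0u.
apply: (chart_cvg_inv phi_chart) => //; rewrite phi_phi0 //.
apply: cvg_trans phi0u; apply: near_eq_cvg.
by near=> t; rewrite /= phi_phi0 //; near: t.
Unshelve. all: by end_near.
Qed.

End regular_charts.

Section curves_through_regular_charts.
Context {R : realType} {X X0 : completeNormedModType R} {i : {linear X0 -> X}}.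
Context {M M0 : topologicalType} {j : M0 -> M} {A : set (set M * (M -> X))}.
Hypothesis embedded : C1_embedded i j A.
Context {f : R -> M0}.
Hypothesis f_cvg : f @ (0 : R) --> f 0.

Lemma restricted_curve_derivable {c} {phi0 : M0 -> X0} :
  A c -> c.1 (j (f 0)) -> restricts i j c phi0 ->
  derivable (phi0 \o f) 0 1 -> derivable (fun t => c.2 (j (f t))) 0 1.
Proof.
move=> Ac cf0 phi0c phi0f_der.
case: embedded => [[_ [_ _ [C _ iC]]] _ _ _ _].
have near_c := regular_domain_near embedded Ac cf0 f_cvg.
apply: (proj1 (derive1_linear_approx iC phi0f_der _)) => e e0.
near=> t; have ct : c.1 (j (f t)) by near: t.
by rewrite /= -(phi0c _ ct) -(phi0c _ cf0) linearB subrr normr0 mulr_ge0 ?normr_ge0 // ltW.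
Unshelve. all: by end_near.
Qed.

Lemma regular_chart_chain_rule {c d} {phi0 : M0 -> X0} {G : X0 -> X}
    {DG : X0 -> {linear X -> X}} :
  A c -> A d -> c.1 (j (f 0)) -> d.1 (j (f 0)) -> restricts i j c phi0 ->
  (forall m, c.1 (j m) -> d.1 (j m) -> G (phi0 m) = d.2 (j m)) ->
  frakC1 i (phi0 @` (j @^-1` (c.1 `&` d.1))) G DG ->
  derivable (fun t => c.2 (j (f t))) 0 1 ->
  derivable (fun t => d.2 (j (f t))) 0 1 /\
  'D_1 (fun t => d.2 (j (f t))) 0 =
    DG (phi0 (f 0)) ('D_1 (fun t => c.2 (j (f t))) 0).
Proof.
move=> Ac Ad cf0 df0 phi0c G_trans G_C1 c_der.
have U0f0 : (phi0 @` (j @^-1` (c.1 `&` d.1))) (phi0 (f 0)) by exists (f 0).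
have [_ DG_bounded _ _] := G_C1.
have [C DGC] := DG_bounded _ U0f0.
have near_c := regular_domain_near embedded Ac cf0 f_cvg.
have near_d := regular_domain_near embedded Ad df0 f_cvg.
have phi0f_cvg : (phi0 \o f) @ (0 : R) --> phi0 (f 0).
  by apply: (regular_chart_cvg embedded Ac cf0 phi0c); exact: f_cvg.
apply: (derive1_linear_approx DGC c_der) => e e0.
have G_rem := phi0f_cvg _ (frakC1_remainder_le G_C1 _ U0f0 _ e0).
near=> t; have [ct dt] : c.1 (j (f t)) /\ d.1 (j (f t)) by split; near: t.
rewrite -(G_trans _ ct dt) -(G_trans _ cf0 df0) -(phi0c _ ct) -(phi0c _ cf0).
by near: t.
Unshelve. all: by end_near.
Qed.

End curves_through_regular_charts.

Theorem lemma2p7 (R : realType) (X X0 : completeNormedModType R)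
    (i : {linear X0 -> X}) (M M0 : topologicalType) (j : M0 -> M)
    (A : set (set M * (M -> X)))
    (hM : banach_manifold M X) (hM0 : banach_manifold M0 X0)
    (hemb : C1_embedded i j A) (hspread : inward_spreadable i j A)
    (eta : M0) (f : R -> M0) (hf0 : f 0 = eta)
    (hstrong : strongly_differentiable_at0 i j A f) :
  (forall c, A c -> c.1 (j eta) ->
     (\forall t \near (0 : R), c.1 (j (f t))) /\
     derivable (fun t : R => c.2 (j (f t))) 0 1) /\
  (forall c d, A c -> A d -> c.1 (j eta) -> d.1 (j eta) ->
     forall (phi0 : M0 -> X0), restricts i j c phi0 ->
     forall (F : X0 -> X) (DF : X0 -> {linear X -> X}),
       (forall m, c.1 (j m) -> d.1 (j m) -> F (phi0 m) = d.2 (j m)) ->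
       frakC1 i (phi0 @` (j @^-1` (c.1 `&` d.1))) F DF ->
       'D_1 (fun t : R => d.2 (j (f t))) 0 =
         DF (phi0 eta) ('D_1 (fun t : R => c.2 (j (f t))) 0)).
Proof.
subst eta; case: hstrong => c0 [p0 [Ac0 c0f0 p0c0 near_c0 p0f_der]].
have f_cvg : f @ (0 : R) --> f 0.
  apply: (regular_chart_cvg_inv hemb Ac0 c0f0 p0c0 near_c0).
  exact/differentiable_continuous/derivable1_diffP.
have c0f_der := restricted_curve_derivable hemb f_cvg Ac0 c0f0 p0c0 p0f_der.
have c_der c : A c -> c.1 (j (f 0)) -> derivable (fun t => c.2 (j (f t))) 0 1.
  move=> Ac cf0; have [_ _ _ _ D5] := hemb.
  have [G [DG [G_trans G_C1]]] := (D5 _ _ _ Ac0 Ac c0f0 cf0).1 _ p0c0.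
  by have [] := regular_chart_chain_rule hemb f_cvg Ac0 Ac c0f0 cf0 p0c0 G_trans G_C1 c0f_der.
split=> [c Ac cf0 | c d Ac Ad cf0 df0 phi0 phi0c G DG G_trans G_C1].
  split; last exact: c_der.
  exact: (regular_domain_near hemb Ac cf0 f_cvg).
by have [] := regular_chart_chain_rule hemb f_cvg Ac Ad cf0 df0 phi0c G_trans G_C1 (c_der _ Ac cf0).
Qed.
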